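(* Let $n\ge1$ and consider the SBCM with parameters $\gamma\ge0$, $\delta\ge0$ on the path graph $P_n$ with nodes $1,2,\ldots,n+2$ (edges $\{k,k+1\}$), where nodes $1$ and $n+2$ are zealots with opinions $-(n+1)/2$ and $(n+1)/2$ respectively, and nodes $2,\ldots,n+1$ are persuadable. Let $\bar{\mathbf{x}}$ be the harmonic state $\bar x_k=k-\frac{n+3}{2}$ (so adjacent nodes have opinions differing by exactly $1$), which is a steady state for every $\gamma$. Let $v=\omega(1)=\frac{1}{1+e^{\gamma-\gamma\delta}}$ and $g(\gamma)=2\gamma(1-v)-1$. Then $\bar{\mathbf{x}}$ is linearly stable if and only if $g(\gamma)<0$, and is linearly unstable if and only if $g(\gamma)>0$.
   Context: The SBCM on a graph with zealots $\mathcal{Z}$ and persuadable nodes $\mathcal{P}$: with $w(x_i,x_j)=\omega(|x_i-x_j|)=\frac{1}{1+e^{\gamma(x_i-x_j)^2-\gamma\delta}}$ for adjacent $i\sim j$ and $0$ otherwise, the dynamics are $\frac{dx_i}{dt}=f_i(\mathbf{x})=\frac{\sum_j w(x_i,x_j)(x_j-x_i)}{\sum_j w(x_i,x_j)}$ for $i\in\mathcal{P}$ and $\frac{dx_i}{dt}=0$ for zealots. A steady state is linearly stable if all eigenvalues of $\mathbf{J}_{\mathcal{P}}=(\partial f_i/\partial x_j)_{i,j\in\mathcal{P}}$ at it are strictly negative, and linearly unstable if $\mathbf{J}_{\mathcal{P}}$ has a strictly positive eigenvalue. *)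

From HB Require Import structures.
From mathcomp Require Import all_boot all_order all_algebra.
From mathcomp Require Import all_classical all_reals all_analysis.
From mathcomp Require Import complex.
Set Implicit Arguments. Unset Strict Implicit. Unset Printing Implicit Defensive.
Import Order.TTheory GRing.Theory Num.Theory.
Local Open Scope ring_scope.

Section SBCM.
Variable R : realType.

Definition omega (gamma delta r : R) : R :=
  1 / (1 + expR (gamma * r ^+ 2 - gamma * delta)).

Definition sbcm_w (N : nat) (adj : rel 'I_N) (gamma delta : R)
  (x : 'I_N -> R) (i j : 'I_N) : R :=
  if adj i j then omega gamma delta `|x i - x j| else 0.

Definition sbcm_f (N : nat) (adj : rel 'I_N) (gamma delta : R)
  (x : 'I_N -> R) (i : 'I_N) : R :=
  (\sum_(j < N) sbcm_w adj gamma delta x i j * (x j - x i))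
  / (\sum_(j < N) sbcm_w adj gamma delta x i j).

(* J_P: Jacobian restricted to the persuadable nodes, enumerated by
   pinj : 'I_m -> 'I_N; entry (i,j) = d f_{pinj i} / d x_{pinj j} at xs. *)
Definition sbcm_JP (N m : nat) (adj : rel 'I_N) (pinj : 'I_m -> 'I_N)
  (gamma delta : R) (xs : 'I_N -> R) : 'M[R]_m :=
  \matrix_(i < m, j < m)
    derive1 (fun t : R => sbcm_f adj gamma delta
        (fun k => if k == pinj j then t else xs k) (pinj i)) (xs (pinj j)).

(* eigenvalues are taken in the complex numbers *)
Definition cmx (m : nat) (A : 'M[R]_m) : 'M[complex.complex R]_m :=
  map_mx (fun r => complex.Complex r 0) A.

Definition linearly_stable (m : nat) (J : 'M[R]_m) : Prop :=
  forall lam : complex.complex R, eigenvalue (cmx J) lam -> lam < 0.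

Definition linearly_unstable (m : nat) (J : 'M[R]_m) : Prop :=
  exists lam : complex.complex R, eigenvalue (cmx J) lam /\ 0 < lam.

(* Path graph on n+2 nodes; node k (1-based) is index k-1. *)
Definition path_adj (n : nat) : rel 'I_n.+2 :=
  fun i j => (i.+1 == j :> nat) || (j.+1 == i :> nat).

(* persuadable nodes 2..n+1 = indices 1..n *)
Definition path_pinj (n : nat) (i : 'I_n) : 'I_n.+2 :=
  lift ord0 (widen_ord (leqnSn n) i).

(* harmonic state: xbar_k = k - (n+3)/2 for node k = index+1 ;
   zealots get -(n+1)/2 and (n+1)/2 *)
Definition path_xbar (n : nat) (k : 'I_n.+2) : R :=
  (k.+1)%:R - (n.+3)%:R / 2.

Definition path_JP (n : nat) (gamma delta : R) : 'M[R]_n :=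
  sbcm_JP (@path_adj n) (@path_pinj n) gamma delta (@path_xbar n).

End SBCM.

(* At the harmonic state every persuadable node sees its neighbours at
   relative opinions -1 and +1, so the numerator of f_i vanishes and only its
   derivative survives.  With pull u := omega(u) u one finds
   pull'(+-1) = -omega(1) g, hence J_P = (g/2) L, where L is the Dirichlet
   Laplacian tridiag(-1, 2, -1) of the path.  L is positive definite, since
   v L v^* = |v_0|^2 + sum_k |v_k - v_(k+1)|^2 with v_n = 0; testing the
   eigen-equation of J_P against the eigenvector therefore shows that every
   complex eigenvalue of J_P is g/2 times a positive real number. *)

From Pilot Require Import Defs.
From HB Require Import structures.
From mathcomp Require Import all_boot all_order all_algebra.
From mathcomp Require Import all_classical all_reals all_analysis.
From mathcomp Require Import complex.
From mathcomp Require Import ring zify.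
Import Order.TTheory GRing.Theory Num.Theory.
Set Implicit Arguments. Unset Strict Implicit. Unset Printing Implicit Defensive.
Local Open Scope ring_scope.
Local Open Scope sesquilinear_scope.

Section ZeroExtension.
Variables (V : nmodType) (n : nat) (x : 'I_n -> V).

Definition zext (k : nat) : V := oapp x 0 (insub k).

Lemma zextE (i : 'I_n) : zext i = x i.
Proof. by rewrite /zext valK. Qed.

Lemma zext_out k : (n <= k)%N -> zext k = 0.
Proof. by move=> nk; rewrite /zext insubF // ltnNge nk. Qed.

End ZeroExtension.

Lemma zext_comp (V W : nmodType) n (f : {additive V -> W}) (x : 'I_n -> V) k :
  zext (f \o x) k = f (zext x k).
Proof. by rewrite /zext; case: insub => /= [i|]; rewrite ?raddf0. Qed.

Lemma sum_delta_mul (T : pzSemiRingType) n (x : 'I_n -> T) k :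
  \sum_(i < n) (i == k :> nat)%:R * x i = zext x k.
Proof.
have [kn|nk] := ltnP k n; last first.
  rewrite zext_out // big1 // => i _; case: eqP => [ik|]; last by rewrite mul0r.
  by move: (ltn_ord i); rewrite ik ltnNge nk.
rewrite (bigD1 (Ordinal kn)) //= eqxx mul1r big1 ?addr0.
  by rewrite -[k]/(nat_of_ord (Ordinal kn)) zextE.
move=> i /negPf ik; case: eqP => [e|]; last by rewrite mul0r.
by move: ik; rewrite -val_eqE /= e eqxx.
Qed.

Definition path_laplacian (T : pzRingType) (n : nat) : 'M[T]_n :=
  \matrix_(i, j) ((i == j :> nat)%:R *+ 2 - (i == j.+1 :> nat)%:R
                  - (i.+1 == j :> nat)%:R).

Lemma map_path_laplacian (S T : pzRingType) (f : {rmorphism S -> T}) n :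
  map_mx f (path_laplacian S n) = path_laplacian T n.
Proof. by apply/matrixP => i j; rewrite !mxE !rmorphB rmorphMn !rmorph_nat. Qed.

Definition posdefmx (C : numClosedFieldType) n (A : 'M[C]_n) :=
  forall v : 'rV_n, v != 0 -> 0 < (v *m A *m v ^t* ) 0 0.

Section PathLaplacianPosdef.
Variables (C : numClosedFieldType) (n : nat).

Lemma path_laplacian_form (v : 'rV[C]_n) (z := zext (v 0)) :
  (v *m path_laplacian C n *m v ^t* ) 0 0 =
  \sum_(k < n) (z k * (z k)^* *+ 2 - z k.+1 * (z k)^* - z k * (z k.+1)^* ).
Proof.
rewrite {}/z.
have conj_z k : zext (fun j => (v 0 j)^* ) k = (zext (v 0) k)^*.
  exact: (zext_comp Num.Def.conjC).
rewrite mxE (eq_bigr (fun j : 'I_n => \sum_(i < n)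
   ((i == j :> nat)%:R * v 0 i * (v 0 j)^* *+ 2
    - (i == j.+1 :> nat)%:R * v 0 i * (v 0 j)^*
    - v 0 i * ((j == i.+1 :> nat)%:R * (v 0 j)^* )))); last first.
  move=> j _; rewrite !mxE mulr_suml; apply: eq_bigr => i _.
  by rewrite !mxE [(j == _ :> nat)]eq_sym mulrnAl; ring.
under eq_bigr do rewrite !sumrB.
rewrite !sumrB; congr (_ - _ - _).
- by apply: eq_bigr => j _; rewrite sumrMnl -mulr_suml sum_delta_mul zextE.
- by apply: eq_bigr => j _; rewrite -mulr_suml sum_delta_mul zextE.
- rewrite exchange_big; apply: eq_bigr => i _.
  by rewrite -mulr_sumr sum_delta_mul conj_z zextE.
Qed.

Lemma path_laplacian_sos (v : 'rV[C]_n) (z := zext (v 0)) :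
  (v *m path_laplacian C n *m v ^t* ) 0 0 =
  z 0%N * (z 0%N)^* + \sum_(k < n) (z k - z k.+1) * (z k - z k.+1)^*.
Proof.
suff telescope m (x : nat -> C) :
    \sum_(k < m) (x k * (x k)^* *+ 2 - x k.+1 * (x k)^* - x k * (x k.+1)^* ) =
    x 0%N * (x 0%N)^* + \sum_(k < m) (x k - x k.+1) * (x k - x k.+1)^*
    - x m * (x m)^*.
  by rewrite path_laplacian_form telescope (zext_out _ (leqnn n)) mul0r subr0.
elim: m => [|m IHm]; first by rewrite !big_ord0; ring.
by rewrite !big_ord_recr /= IHm rmorphB /=; ring.
Qed.

Lemma path_laplacian_posdefmx : posdefmx (path_laplacian C n).
Proof.
move=> v v_neq0; rewrite path_laplacian_sos; set z := zext (v 0).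
have sum_ge0 : 0 <= \sum_(k < n) (z k - z k.+1) * (z k - z k.+1)^*.
  by apply: sumr_ge0 => k _; rewrite mul_conjC_ge0.
rewrite lt_def addr_ge0 ?mul_conjC_ge0 // andbT.
apply: contra v_neq0; rewrite paddr_eq0 ?mul_conjC_ge0 //.
case/andP; rewrite mul_conjC_eq0 => /eqP z0 /eqP sum0.
have step := psumr_eq0P (fun k _ => mul_conjC_ge0 _) sum0.
have z_eq0 k : (k <= n)%N -> z k = 0.
  elim: k => [//|k IHk] kn.
  move/eqP: (step (Ordinal kn) isT); rewrite mul_conjC_eq0 subr_eq0 => /eqP <-.
  exact/IHk/ltnW.
by apply/eqP/rowP => i; rewrite mxE -zextE; apply/z_eq0/ltnW.
Qed.

End PathLaplacianPosdef.

Lemma eigenvalue_scale_posdefmx (C : numClosedFieldType) n (A : 'M[C]_n)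
    (c lam : C) :
  posdefmx A -> eigenvalue (c *: A) lam -> exists2 s, 0 < s & lam = c * s.
Proof.
move=> A_pos /eigenvalueP[v vE v_neq0].
pose q := v *m A *m v ^t*; pose p := v *m v ^t*.
have p_gt0 : 0 < p 0 0 by rewrite -dotmxE dnorm_gt0.
have lamE : c * q 0 0 = lam * p 0 0.
  have /matrixP/(_ 0 0) := congr1 (mulmx^~ (v ^t* )) vE.
  by rewrite -scalemxAr -!scalemxAl !mxE.
exists (q 0 0 / p 0 0); first by rewrite divr_gt0 ?A_pos.
by rewrite mulrA lamE mulfK ?gt_eqF.
Qed.

Lemma linear_stability_scale_posdefmx (R : realType) n (J : 'M[R]_n)
    (A : 'M[R[i]]_n) (c : R) :
  (0 < n)%N -> posdefmx A -> cmx J = c%:C%C *: A ->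
  (linearly_stable J <-> c < 0) /\ (linearly_unstable J <-> 0 < c).
Proof.
move=> n_gt0 A_pos JE.
have eig_sign lam :
    eigenvalue (cmx J) lam -> ((lam < 0) = (c < 0)) * ((0 < lam) = (0 < c)).
  rewrite JE => /(eigenvalue_scale_posdefmx A_pos)[s s_gt0 ->].
  by rewrite pmulr_llt0 // pmulr_lgt0 // -!ltcR.
have [lam0 eig0] := eigenvalue_closed (cmx J) n_gt0.
split; split.
- by move=> /(_ lam0 eig0); rewrite (eig_sign _ eig0).
- by move=> c_lt0 lam /eig_sign ->.
- by move=> [lam [/eig_sign ->]].
- by move=> c_gt0; exists lam0; rewrite (eig_sign _ eig0).
Qed.

Section Weight.
Variables (R : realType) (gamma delta : R).
Local Notation omega := (omega gamma delta).

Lemma omega_gt0 u : 0 < omega u.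
Proof. by rewrite /Defs.omega divr_gt0 // addr_gt0 ?expR_gt0. Qed.

Lemma omegaN u : omega (- u) = omega u.
Proof. by rewrite /Defs.omega sqrrN. Qed.

Lemma omega_norm u : omega `|u| = omega u.
Proof. by rewrite /Defs.omega real_normK // num_real. Qed.

Lemma is_derive_omega (u : R) :
  is_derive u 1 omega (- (2 * gamma * u) * omega u * (1 - omega u)).
Proof.
rewrite /Defs.omega; set e := expR _.
have e1_neq0 : 1 + e != 0 by rewrite lt0r_neq0 // addr_gt0 ?expR_gt0.
apply: is_derive_eq; rewrite /GRing.scale /= -/e.
by field.
Qed.

#[local] Existing Instance is_derive_omega.

Definition pull u := omega u * u.

Lemma is_derive_pull (u : R) :
  is_derive u 1 pull (omega u * (1 - 2 * gamma * u ^+ 2 * (1 - omega u))).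
Proof. by rewrite /pull; apply: is_derive_eq; rewrite /GRing.scale /=; ring. Qed.

#[local] Existing Instance is_derive_pull.

Lemma is_derive_local_drift (a b : R -> R) (t0 da db : R) :
  is_derive t0 1 a da -> is_derive t0 1 b db -> a t0 = -1 -> b t0 = 1 ->
  is_derive t0 1 (fun t => (pull (a t) + pull (b t)) / (omega (a t) + omega (b t)))
    (- (2 * gamma * (1 - omega 1) - 1) / 2 * (da + db)).
Proof.
move=> a' b' at0 bt0.
(* without it, the instance search for the derivative of the quotient diverges *)
have D_neq0 : omega (a t0) + omega (b t0) != 0.
  by rewrite lt0r_neq0 // addr_gt0 ?omega_gt0.
have N0 : pull (a t0) + pull (b t0) = 0.
  by rewrite /pull at0 bt0 omegaN mulrN1 mulr1 addNr.
apply: is_derive_eq; rewrite N0 scale0r add0r at0 bt0 omegaN /GRing.scale /=.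
have := omega_gt0 1; set w := omega 1 => w_gt0.
by field; rewrite lt0r_neq0 ?addr_gt0.
Qed.

End Weight.

Section PathJacobian.
Variables (R : realType) (gamma delta : R) (n : nat).
Local Notation omega := (omega gamma delta).
Local Notation pull := (pull gamma delta).

Lemma val_path_pinj (i : 'I_n) : path_pinj i = i.+1 :> nat.
Proof. by []. Qed.

Lemma sum_path_adj (V : nmodType) (i : 'I_n) (F : 'I_n.+2 -> V) :
  \sum_(k < n.+2) (if path_adj (path_pinj i) k then F k else 0) =
  F (inord i) + F (inord i.+2).
Proof.
have i_lt := ltn_ord i.
have iE : (inord i : 'I_n.+2) = i :> nat by rewrite inordK //; lia.
have i2E : (inord i.+2 : 'I_n.+2) = i.+2 :> nat by rewrite inordK.
have adj_i : path_adj (path_pinj i) (inord i).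
  by rewrite /path_adj val_path_pinj iE; lia.
have adj_i2 : path_adj (path_pinj i) (inord i.+2).
  by rewrite /path_adj val_path_pinj i2E; lia.
rewrite -big_mkcond (bigD1 (inord i)) // (bigD1 (inord i.+2)) /=; last first.
  by rewrite adj_i2 -val_eqE /= iE i2E; lia.
rewrite big1 ?addr0 // => k /andP[/andP[adj_k k_i] k_i2].
by move: adj_k k_i k_i2; rewrite /path_adj val_path_pinj -!val_eqE /= iE i2E; lia.
Qed.

Lemma sbcm_f_path (x : 'I_n.+2 -> R) (i : 'I_n) :
  let a := x (inord i) - x (path_pinj i) in
  let b := x (inord i.+2) - x (path_pinj i) in
  sbcm_f (@path_adj n) gamma delta x (path_pinj i) =
  (pull a + pull b) / (omega a + omega b).
Proof.
rewrite /sbcm_f /sbcm_w.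
under eq_bigr do rewrite (fun_if (fun w => w * _)) mul0r distrC omega_norm.
by rewrite !sum_path_adj !(distrC (x (path_pinj i))) !omega_norm.
Qed.

Lemma is_derive_update_sub (y : 'I_n.+2 -> R) (p k l : 'I_n.+2) (t : R) :
  is_derive t 1 (fun s => (if k == p then s else y k) - (if l == p then s else y l))
    ((k == p)%:R - (l == p)%:R).
Proof. by case: (k == p); case: (l == p); apply: is_derive_eq => /=; ring. Qed.

Lemma path_xbar_sub (k l : 'I_n.+2) : path_xbar R k - path_xbar R l = k%:R - l%:R.
Proof. by rewrite /path_xbar; ring. Qed.

Lemma path_JP_laplacian :
  path_JP n gamma delta =
  ((2 * gamma * (1 - omega 1) - 1) / 2) *: path_laplacian R n.
Proof.
apply/matrixP => i j; rewrite !mxE derive1E.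
set p := path_pinj j; set xt := fun t k => if k == p then t else path_xbar R k.
have xt0 k : xt (path_xbar R p) k = path_xbar R k.
  by rewrite /xt; case: eqP => [->|].
rewrite (funext (fun t => sbcm_f_path (xt t) i)) /=.
have i_lt := ltn_ord i.
have iE : (inord i : 'I_n.+2) = i :> nat by rewrite inordK //; lia.
have i2E : (inord i.+2 : 'I_n.+2) = i.+2 :> nat by rewrite inordK.
have a0 : xt (path_xbar R p) (inord i) - xt (path_xbar R p) (path_pinj i) = -1.
  by rewrite !xt0 path_xbar_sub iE val_path_pinj -natr1; ring.
have b0 : xt (path_xbar R p) (inord i.+2) - xt (path_xbar R p) (path_pinj i) = 1.
  by rewrite !xt0 path_xbar_sub i2E val_path_pinj -!natr1; ring.
rewrite (@derive_val _ _ _ _ _ _ _ (is_derive_local_drift gamma delta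
  (is_derive_update_sub _ _ _ _ _) (is_derive_update_sub _ _ _ _ _) a0 b0)).
by rewrite /p -!val_eqE /= iE i2E /bump !add1n !eqSS; ring.
Qed.

End PathJacobian.

Theorem lemma3 (R : realType) (n : nat) (gamma delta : R) :
  (1 <= n)%N -> 0 <= gamma -> 0 <= delta ->
  let v := omega gamma delta 1 in
  let g := 2 * gamma * (1 - v) - 1 in
  (linearly_stable (path_JP n gamma delta) <-> g < 0) /\
  (linearly_unstable (path_JP n gamma delta) <-> 0 < g).
Proof.
move=> n_gt0 _ _ v g.
have JE : cmx (path_JP n gamma delta) = (g / 2)%:C%C *: path_laplacian R[i] n.
  by rewrite path_JP_laplacian -(map_path_laplacian (real_complex R)) -map_mxZ.
have := linear_stability_scale_posdefmx n_gt0 (@path_laplacian_posdefmx _ n) JE.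
by rewrite pmulr_llt0 ?pmulr_lgt0 ?invr_gt0.
Qed.
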